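(* Let $w\ge 1$. (a) Every permutation $\pi\in S_n$ of bandwidth $w$ (i.e. $|\pi_i-i|\le w$ for all $i$) is a product of at most $2w-1$ permutations of bandwidth $1$. (b) The bound $2w-1$ is sharp: for every $n\ge 2w$, the permutation $\sigma\in S_n$ given by $\sigma=(w+1)(w+2)\cdots(2w)\,1\,2\cdots w\,(2w+1)(2w+2)\cdots n$ in one-line notation (i.e. $\sigma_i=w+i$ for $1\le i\le w$, $\sigma_i=i-w$ for $w<i\le 2w$, $\sigma_i=i$ for $i>2w$) has bandwidth $w$ and cannot be written as a product of fewer than $2w-1$ permutations of bandwidth $1$.
   Context: A permutation $\rho\in S_n$ has bandwidth $w$ if $|\rho_i-i|\le w$ for all $i$, where $\rho_i=\rho(i)$. *)

(* Permutations of {0,..,n-1} are 'S_n (0-indexed). *)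
From mathcomp Require Import all_boot all_fingroup.
Set Implicit Arguments. Unset Strict Implicit. Unset Printing Implicit Defensive.

Definition bandwidth (n : nat) (rho : 'S_n) (w : nat) : Prop :=
  forall i : 'I_n, (rho i <= i + w) && (i <= rho i + w).

Definition prod_bw1_atmost (n : nat) (rho : 'S_n) (k : nat) : Prop :=
  exists ss : seq 'S_n,
    [/\ size ss <= k, (forall s, s \in ss -> bandwidth s 1)
      & rho = (\prod_(s <- ss) s)%g].

(* 0-indexed one-line form of sigma = (w+1)...(2w) 1 ... w (2w+1) ... n *)
Definition sigma_val (w i : nat) : nat :=
  if i < w then i + w else if i < 2 * w then i - w else i.

From mathcomp Require Import all_boot all_fingroup zify.
From Stdlib Require Import ZArith.
Set Implicit Arguments. Unset Strict Implicit. Unset Printing Implicit Defensive.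

(* (a) Sort pi by 2w-1 rounds of compare-exchanges between adjacent positions.
   Each round swaps disjoint pairs of neighbours, so it is a permutation of
   bandwidth 1, and undoing the rounds writes pi as their product. By the 0-1
   principle it suffices that, for every threshold v, no entry >= v is left
   among the first v positions. Call v tight when these positions already hold
   the maximal number w of such entries: then no entry crosses position v - w,
   which thus acts as a wall. Between consecutive walls the rounds follow an
   odd-even transposition schedule whose phase gives a tight threshold all
   2w-1 rounds, and the number of entries >= v in a prefix obeys a max-plus
   recursion that, starting from the bounds imposed by the bandwidth, reaches 0
   at position v within 2w-1 rounds.
   (b) A factor of bandwidth 1 moves every point by at most one place, and
   moves the second of two neighbouring points only after the first has moved
   away. Hence after t factors the i-th most advanced of the points 0..w-1 has
   advanced by at most t + 1 - i places; the last one starts at 0, while sigma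
   sends it to a position >= w, so t + 1 - w >= w. *)

Lemma card_ord_count N (P : pred nat) : #|[set x : 'I_N | P x]| = count P (iota 0 N).
Proof.
rewrite -val_enum_ord count_map cardsE cardE /=.
by rewrite -size_filter /enum_mem filter_predT.
Qed.

Lemma card_ord_range N lo hi : #|[set x : 'I_N | lo <= x < hi]| = minn hi N - minn lo N.
Proof.
rewrite (card_ord_count N (fun x => lo <= x < hi)).
elim: N => [|N IH]; first by rewrite !minn0.
rewrite -addn1 iotaD count_cat IH /= addn0; case: (leqP lo N); case: (ltnP N hi); lia.
Qed.

Lemma card_ord_range_le N lo hi : #|[set x : 'I_N | lo <= x < hi]| <= hi - lo.
Proof. rewrite card_ord_range; lia. Qed.

Lemma card_ord_lt N m : #|[set x : 'I_N | x < m]| = minn m N.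
Proof.
rewrite (eq_card (B := [set x : 'I_N | 0 <= x < m])) ?card_ord_range; first lia.
by move=> x; rewrite !inE.
Qed.

Lemma card_ord_ge N m : #|[set x : 'I_N | m <= x]| = N - m.
Proof.
rewrite (eq_card (B := [set x : 'I_N | m <= x < N])) ?card_ord_range; first lia.
by move=> x; rewrite !inE ltn_ord andbT.
Qed.

Lemma card_perm_preim (T : finType) (a : {perm T}) (P : pred T) :
  #|[set x | P (a x)]| = #|[set y | P y]|.
Proof.
rewrite -(card_preimset [set y | P y] (@perm_inj _ a)).
by apply: eq_card => x; rewrite !inE.
Qed.

Lemma bandwidthP n (rho : 'S_n) w (i : 'I_n) :
  bandwidth rho w -> rho i <= i + w /\ i <= rho i + w.
Proof. by move=> h; have /andP[] := h i. Qed.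

Section Exchange.
Variable N : nat.
Implicit Types (a : 'S_N) (act : nat -> bool).

Definition at_pos a j : nat := if insub j is Some p then a p else 0.

Lemma at_posE a (p : 'I_N) : at_pos a p = a p.
Proof. by rewrite /at_pos valK. Qed.

(* Comparator [j] compares positions [j.-1] and [j]; it fires only if it is
   active, isolated from the active comparators next to it, and finds an
   inversion, so that the fired comparators of a round are disjoint. *)
Definition exch a act j :=
  [&& 0 < j, j < N, act j, ~~ act j.+1, ~~ act j.-1 & at_pos a j < at_pos a j.-1].

Definition exch_pos a act p := if exch a act p.+1 then p.+1 else if exch a act p then p.-1 else p.

Lemma exch_pos_lt a act p : p < N -> exch_pos a act p < N.
Proof. by rewrite /exch_pos /exch; case: ifP => [/and3P[_ ? _]|_] //; case: ifP; lia. Qed.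

Lemma exch_posK a act : involutive (exch_pos a act).
Proof.
move=> p; rewrite /exch_pos.
have [h1|h1] := boolP (exch a act p.+1).
  have /negbTE hn : ~~ act p.+2 by move: h1 => /and4P[_ _ _ /andP[]].
  by rewrite {1}/exch hn !andbF h1.
have [h2|h2] := boolP (exch a act p); last by rewrite (negbTE h1) (negbTE h2).
by move: (h2) => /and3P[hp _ _]; rewrite prednK // h2.
Qed.

Lemma exch_pos_dist a act p : exch_pos a act p <= p.+1 /\ p <= (exch_pos a act p).+1.
Proof. by rewrite /exch_pos; case: ifP => _; [|case: ifP => _]; lia. Qed.

(* [exch_perm a act * a] is the arrangement [a] after the round: products of
   permutations compose left to right, [(s * a) p = a (s p)]. *)
Definition exch_perm a act : 'S_N :=
  perm (fun p q (e : Ordinal (exch_pos_lt a act (ltn_ord p)) =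
                     Ordinal (exch_pos_lt a act (ltn_ord q))) =>
          ord_inj (can_inj (exch_posK a act) (congr1 val e))).

Lemma exch_permE a act (p : 'I_N) : exch_perm a act p = exch_pos a act p :> nat.
Proof. by rewrite permE. Qed.

Lemma exch_perm_bw1 a act : bandwidth (exch_perm a act) 1.
Proof. by move=> p; rewrite exch_permE; have := exch_pos_dist a act p; lia. Qed.

Lemma exch_permK a act : involutive (exch_perm a act).
Proof. by move=> p; apply: ord_inj; rewrite !exch_permE exch_posK. Qed.

Lemma exch_perm_sqr a act : (exch_perm a act * exch_perm a act = 1)%g.
Proof. by apply/permP => p; rewrite permM perm1 exch_permK. Qed.

Lemma exch_pos_ltE a act j q : ~~ exch a act j -> (exch_pos a act q < j) = (q < j).
Proof.
move=> hj; rewrite /exch_pos.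
have [h1|h1] := boolP (exch a act q.+1).
  have : q.+1 != j by apply: contraNneq hj => <-.
  lia.
have [h2|//] := boolP (exch a act q).
have : q != j by apply: contraNneq hj => <-.
by move: h2 => /and3P[] *; lia.
Qed.

(* [ones a v j] counts the entries [>= v] among the first [j] positions of the
   arrangement [a]; [a] is sorted iff [ones a v v = 0] for every threshold [v]. *)
Definition ones a v j := #|[set q : 'I_N | (q < j) && (v <= a q)]|.

Lemma ones_exch a act v j :
  ones (exch_perm a act * a) v j = #|[set q : 'I_N | (exch_pos a act q < j) && (v <= a q)]|.
Proof.
rewrite -(card_perm_preim (exch_perm a act) (fun q => (exch_pos a act q < j) && (v <= a q))).
by apply: eq_card => q; rewrite !inE permM -exch_permE exch_permK.
Qed.

Lemma ones_exch_idle a act v j : ~~ exch a act j -> ones (exch_perm a act * a) v j = ones a v j.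
Proof. by move=> hj; rewrite ones_exch; apply: eq_card => q; rewrite !inE exch_pos_ltE. Qed.

Lemma ones_succ a v (p : 'I_N) : ones a v p.+1 = ones a v p + (v <= a p).
Proof.
rewrite /ones (cardsD1 p) !inE ltnSn /= addnC; congr (_ + _).
apply: eq_card => q; rewrite !inE ltnS leq_eqVlt -val_eqE /=.
by case: eqVneq => //= ->; rewrite ltnn.
Qed.

Lemma ones_exch_active a act v (p q : 'I_N) : q = p.+1 :> nat ->
  act q -> ~~ act q.+1 -> ~~ act p ->
  let b := (exch_perm a act * a)%g in ones b v q <= ones a v p \/ ones b v q < ones a v q.+1.
Proof.
move=> hq hq1 hq2 hp b.
have hexch : exch a act q = (a q < a p).
  have eqp : q.-1 = p by rewrite hq.
  by rewrite /exch eqp hp hq1 hq2 ltn_ord !at_posE hq.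
have idle : ~~ exch a act p by rewrite /exch (negbTE hp) andFb !andbF.
have hbp : b p = minn (a p) (a q) :> nat.
  rewrite permM; have -> : exch_perm a act p = if a q < a p then q else p.
    by apply: ord_inj; rewrite exch_permE /exch_pos -hq hexch (negbTE idle); case: ifP.
  by case: ltnP; lia.
have e1 : ones b v q = ones a v p + (v <= minn (a p) (a q)).
  by rewrite hq (ones_succ b v p) ones_exch_idle // hbp.
have e2 : ones a v q.+1 = ones a v p + (v <= a p) + (v <= a q).
  by rewrite ones_succ hq ones_succ.
by rewrite e1 e2; case: (leqP v (a p)); case: (leqP v (a q)); lia.
Qed.

End Exchange.

Lemma ones_le_wall N (a : 'S_N) v b : (forall p : 'I_N, p < b -> a p < b) -> ones a v b <= b - v.
Proof.
move=> hb; apply: leq_trans (card_ord_range_le N v b).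
rewrite -(card_perm_preim a (fun y : 'I_N => v <= y < b)).
by apply: subset_leq_card; apply/subsetP => p; rewrite !inE => /andP[/hb -> ->].
Qed.

Lemma ones_le_top N (a : 'S_N) v : ones a v N <= N - v.
Proof. by apply: ones_le_wall => p _; apply: ltn_ord. Qed.

Section BandwidthOnes.
Variables (N w : nat) (a : 'S_N).
Hypothesis hbw : bandwidth a w.

Lemma ones_le_bandwidth v j : ones a v j <= j - (v - w).
Proof.
apply: leq_trans (card_ord_range_le N (v - w) j); apply: subset_leq_card.
apply/subsetP => p; rewrite !inE => /andP[-> hp]; rewrite andbT.
by have [+ _] := bandwidthP p hbw; lia.
Qed.

Lemma ones_le_maxn v j : ones a v j <= maxn (j - v) w.
Proof.
set A := [set q : 'I_N | v <= a q]; set B := [set q : 'I_N | q < j].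
have e1 : ones a v j = #|A :&: B| by apply: eq_card => q; rewrite !inE andbC.
have e2 : #|A| = N - v by rewrite (card_perm_preim a (fun y : 'I_N => v <= y)) card_ord_ge.
have e3 : N - maxn j (v + w) <= #|A :\: B|.
  rewrite -card_ord_ge; apply: subset_leq_card; apply/subsetP => q; rewrite !inE => hq.
  by have [_ +] := bandwidthP q hbw; lia.
by have := cardsID B A; rewrite e1; lia.
Qed.

Hypothesis hw : 0 < w.
Variable v : nat.
Hypothesis htight : ones a v v = w.

Lemma tight_block : [/\ w <= v, v <= N & forall p : 'I_N, v - w <= p < v -> v <= a p].
Proof.
set S := [set q : 'I_N | (q < v) && (v <= a q)]; set I := [set q : 'I_N | v - w <= q < v].
have hSI : S \subset I.
  apply/subsetP => p; rewrite !inE => /andP[-> hp]; rewrite andbT.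
  by have [+ _] := bandwidthP p hbw; lia.
have hI := card_ord_range N (v - w) v.
have := subset_leq_card hSI; rewrite [#|S|]htight hI => hle.
have hvN : w <= v /\ v <= N by lia.
have /eqP eSI : S == I by rewrite eqEcard hSI [#|S|]htight hI; lia.
split; try lia.
move=> p hp; have : p \in S by rewrite eSI inE.
by rewrite inE => /andP[].
Qed.

Lemma tight_wall (p : 'I_N) : p < v - w -> a p < v - w.
Proof.
have [hwv hvN hblock] := tight_block.
set Z := [set q : 'I_N | a q < v - w]; set L := [set q : 'I_N | q < v - w].
have hZL : Z \subset L.
  apply/subsetP => q; rewrite !inE => hq; rewrite ltnNge; apply/negP => hle.
  have [_ h] := bandwidthP q hbw.
  have : v <= a q by apply: hblock; lia.
  lia.
have hZ : #|Z| = v - w by rewrite (card_perm_preim a (fun y : 'I_N => y < v - w)) card_ord_lt; lia.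
have /eqP eZL : Z == L by rewrite eqEcard hZL hZ card_ord_lt; lia.
move=> hp; have : p \in Z by rewrite eZL inE.
by rewrite inE.
Qed.

End BandwidthOnes.

Lemma tight_gap N w (a : 'S_N) v v' : bandwidth a w -> 0 < w ->
  ones a v v = w -> ones a v' v' = w -> v < v' -> v + w < v'.
Proof.
move=> hbw hw ht ht' hvv; rewrite ltnNge; apply/negP => hle.
have [hwv hvN hblock] := tight_block hbw hw ht.
have hp : v - w < N by lia.
have := hblock (Ordinal hp); have := tight_wall hbw hw ht' (p := Ordinal hp) => /=.
lia.
Qed.

(* By [ones_exch_active] an active comparator [j] bounds the new count at [j] by
   the maximum of the old counts at [j - 1] and at [j + 1] minus one; [spread E m x]
   iterates this [m] times from the bound [E], [x] being the offset [j - v]. *)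
Fixpoint spread (E : Z -> Z) (m : nat) (x : Z) : Z :=
  if m is m'.+1 then Z.max (spread E m' (x - 1)) (spread E m' (x + 1) - 1) else E x.

Lemma spread_le E m x c :
  (forall r, r <= m -> (E (x + 2 * Z.of_nat r - Z.of_nat m) <= c + Z.of_nat r)%Z) ->
  (spread E m x <= c)%Z.
Proof.
elim: m x c => [|m IH] x c hE /=.
  by have := hE 0 (leqnn 0); rewrite (_ : (x + 2 * Z.of_nat 0 - Z.of_nat 0 = x)%Z); lia.
apply: Z.max_lub.
  apply: IH => r hr; have := hE r (leqW hr).
  by rewrite (_ : (x - 1 + _ - _ = x + 2 * Z.of_nat r - Z.of_nat m.+1)%Z); lia.
have /Z.le_sub_le_add_r : (spread E m (x + 1) <= c + 1)%Z; last by [].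
apply: IH => r hr; have := hE r.+1 hr.
by rewrite (_ : (x + 1 + _ - _ = x + 2 * Z.of_nat r.+1 - Z.of_nat m.+1)%Z); lia.
Qed.

Lemma spread_ge E : (forall x, Z.max 0 x <= E x)%Z -> forall m x, (Z.max 0 x <= spread E m x)%Z.
Proof.
move=> hE; elim=> [|m IH] x //=.
by have := IH (x - 1)%Z; have := IH (x + 1)%Z; lia.
Qed.

(* The a priori bound at offset [x = j - v]: [ones_le_bandwidth] for [x < 0],
   [ones_le_maxn] for [x > 0], and [k = ones pi v v] at [x = 0]. *)
Definition init_profile (w k x : Z) : Z :=
  if (x =? 0)%Z then k else if (x <? 0)%Z then Z.max 0 (x + w) else Z.max x w.

Lemma init_profile_ge w k x : (0 <= w)%Z -> (0 <= k)%Z -> (Z.max 0 x <= init_profile w k x)%Z.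
Proof. by rewrite /init_profile; case: (Z.eqb_spec x 0); case: (Z.ltb_spec x 0); lia. Qed.

Lemma spread_init_profile_nonpos (w k m : nat) : 0 < w -> 2 * w <= m.+2 -> m < 2 * w ->
  2 * k <= m.+1 -> (spread (init_profile (Z.of_nat w) (Z.of_nat k)) m 0 <= 0)%Z.
Proof.
move=> hw hm1 hm2 hk; apply: spread_le => r hr; rewrite /init_profile.
set x := (0 + _ - _)%Z.
by case: (Z.eqb_spec x 0); case: (Z.ltb_spec x 0); lia.
Qed.

Lemma perm_le_id N (a : 'S_N) : (forall p, a p <= p) -> a = 1%g.
Proof.
move=> h; apply/permP => p; rewrite perm1.
suff: forall k (q : 'I_N), q <= k -> a q = q by apply.
elim=> [|k IH] q hq; first by apply: ord_inj; have := h q; lia.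
have [/IH //|hkq] := leqP q k.
have [hlt|hgt|/ord_inj //] := ltngtP (a q) q; last by have := h q; lia.
have /perm_inj eq := IH (a q) ltac:(lia).
by move: hlt; rewrite {1}eq ltnn.
Qed.

Section Schedule.
Variables (N : nat) (pi : 'S_N) (w : nat).
Hypothesis hw : 0 < w.
Hypothesis hbw : bandwidth pi w.

(* [w] is the largest possible value, by [ones_le_bandwidth]. *)
Definition tight v := ones pi v v == w.

Lemma tight_wall_at b : tight (b + w) -> forall p : 'I_N, p < b -> pi p < b.
Proof. by move=> /eqP hb p; have := tight_wall hbw hw hb (p := p); rewrite addnK. Qed.

(* Comparator [j] is a wall when [j + w] is tight. The phase changes only at
   walls, and makes the last round act at a tight threshold [v], where the
   initial count [w] needs all [2w - 1] rounds to vanish. *)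
Definition last_tight j := \max_(v < j + w | tight v) v.
Definition phase j := odd (last_tight j + (2 * w - 1)).
Definition active t j := ~~ tight (j + w) && (odd (j + t) == phase j).

Fixpoint stage t : 'S_N :=
  if t is t'.+1 then (exch_perm (stage t') (active t) * stage t')%g else pi.

Lemma last_tight_le j : last_tight j <= j + w.
Proof. by apply/bigmax_leqP => i _; apply: ltnW. Qed.

Lemma last_tight_S j : last_tight j.+1 = if tight (j + w) then j + w else last_tight j.
Proof.
rewrite /last_tight addSn big_mkcond big_ord_recr /= -big_mkcond /=.
by case: ifP => _; [apply/maxn_idPr; apply: last_tight_le | rewrite maxn0].
Qed.

Lemma last_tight_tight v : tight v -> last_tight v = v.
Proof.
move=> ht; apply/eqP; rewrite eqn_leq; apply/andP; split.
  apply/bigmax_leqP => u hu; rewrite leqNgt; apply/negP => hvu.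
  by have := tight_gap hbw hw (eqP ht) (eqP hu) hvu; have := ltn_ord u; lia.
have hv : v < v + w by lia.
exact: (@leq_bigmax_cond _ (fun u : 'I_(v + w) => tight u) val (Ordinal hv)).
Qed.

Lemma phase_S j : ~~ tight (j + w) -> phase j.+1 = phase j.
Proof. by move=> h; rewrite /phase last_tight_S (negbTE h). Qed.

Lemma active_nonadj t j : active t j -> ~~ active t j.+1.
Proof.
rewrite /active => /andP[h1 /eqP h2]; rewrite phase_S // -h2 addSn /=.
by case: (odd (j + t)); rewrite andbF.
Qed.

Lemma ones_stage_idle t v j : ~~ active t.+1 j -> ones (stage t.+1) v j = ones (stage t) v j.
Proof. by move=> h; apply: ones_exch_idle; rewrite /exch (negbTE h) !andbF. Qed.

Lemma ones_stage_active t v j : 0 < j -> j < N -> active t.+1 j ->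
  ones (stage t.+1) v j <= ones (stage t) v j.-1 \/
  ones (stage t.+1) v j < ones (stage t) v j.+1.
Proof.
move=> hj0 hjN ha; have hp : j.-1 < N by lia.
have := ones_exch_active (stage t) v (p := Ordinal hp) (q := Ordinal hjN); apply => /=.
- by rewrite prednK.
- exact: ha.
- exact: active_nonadj.
- by apply: contraL ha => /active_nonadj; rewrite prednK.
Qed.

Lemma ones_stage_wall t v b : tight (b + w) -> ones (stage t) v b = ones pi v b.
Proof. by move=> hb; elim: t => [//|t IH]; rewrite ones_stage_idle // /active hb. Qed.

Lemma ones_stage_wall_le t v b : tight (b + w) -> ones (stage t) v b <= b - v.
Proof. by move=> hb; rewrite ones_stage_wall //; apply: ones_le_wall; apply: tight_wall_at. Qed.

Definition profile v := init_profile (Z.of_nat w) (Z.of_nat (ones pi v v)).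
(* The number of rounds, [t] or [t - 1] depending on parity, that have acted
   around position [j] after [t] rounds. *)
Definition delay v t j := if odd (j + t) == phase v then t else t.-1.

Lemma ones_le_profile v j : (Z.of_nat (ones pi v j) <= profile v (Z.of_nat j - Z.of_nat v))%Z.
Proof.
rewrite /profile /init_profile.
set x := (Z.of_nat j - Z.of_nat v)%Z.
case: (Z.eqb_spec x 0) => h1; first by rewrite (_ : j = v); lia.
case: (Z.ltb_spec x 0) => h2.
  by have := ones_le_bandwidth hbw v j; lia.
by have := ones_le_maxn hbw v j; lia.
Qed.

Lemma profile_ge v x : (Z.max 0 x <= profile v x)%Z.
Proof. by apply: init_profile_ge; lia. Qed.

Definition block lo hi v := [/\ lo < v < hi, hi <= N, (lo == 0) || tight (lo + w),
  (hi == N) || tight (hi + w) & forall j, lo < j < hi -> ~~ tight (j + w)].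

Section Block.
Variables lo hi v : nat.
Hypothesis hblock : block lo hi v.

Lemma phase_block j : lo < j < hi -> phase j = phase v.
Proof.
have [/andP[hlo hhi] _ _ _ hfree] := hblock.
suff h : forall d, lo.+1 + d < hi -> phase (lo.+1 + d) = phase lo.+1.
  move=> /andP[hj1 hj2].
  by have := h (j - lo.+1); have := h (v - lo.+1); rewrite !subnKC // => -> // -> .
elim=> [|d IH] hd; first by rewrite addn0.
by rewrite addnS phase_S ?IH ?hfree; lia.
Qed.

Lemma ones_block_boundary t (b : nat) m : (b == lo) || (b == hi) ->
  (Z.of_nat (ones (stage t) v b) <= spread (profile v) m (Z.of_nat b - Z.of_nat v))%Z.
Proof.
have [_ _ hlo hhi _] := hblock.
move=> hb; have : ones (stage t) v b <= b - v.
  case/orP: hb => /eqP ->; [case/orP: hlo => [/eqP ->|] | case/orP: hhi => [/eqP ->|]].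
  - by apply: ones_le_wall.
  - exact: ones_stage_wall_le.
  - exact: ones_le_top.
  - exact: ones_stage_wall_le.
by have := spread_ge (@profile_ge v) (m := m) (x := (Z.of_nat b - Z.of_nat v)%Z); lia.
Qed.

Lemma ones_block_bound t j : lo <= j <= hi ->
  (Z.of_nat (ones (stage t) v j) <= spread (profile v) (delay v t j) (Z.of_nat j - Z.of_nat v))%Z.
Proof.
have [/andP[hlo hhi] hhiN _ _ hfree] := hblock.
elim: t j => [|t IH] j hj.
  by rewrite /delay; case: ifP => _; apply: ones_le_profile.
have [hb|] := boolP ((j == lo) || (j == hi)); first exact: ones_block_boundary.
rewrite negb_or => /andP[/eqP hjlo /eqP hjhi].
have hj' : lo < j < hi by lia.
have hact : active t.+1 j = (odd (j + t.+1) == phase v).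
  by rewrite /active hfree // phase_block.
rewrite /delay; case: ifP => hpar; last first.
  rewrite ones_stage_idle ?hact ?hpar //.
  have := IH j hj; rewrite /delay (_ : (odd (j + t) == phase v) = true) //.
  by move: hpar; rewrite addnS /=; case: (odd (j + t)); case: (phase v).
have hl : delay v t j.-1 = t.
  by move: hpar; rewrite /delay (_ : j + t.+1 = (j.-1 + t).+2) /= ?negbK => [->|]; lia.
have hr : delay v t j.+1 = t by rewrite /delay addSn -addnS hpar.
have := IH j.-1 ltac:(lia); have := IH j.+1 ltac:(lia); rewrite hl hr.
rewrite (_ : (Z.of_nat j.-1 - Z.of_nat v = Z.of_nat j - Z.of_nat v - 1)%Z); last lia.
rewrite (_ : (Z.of_nat j.+1 - Z.of_nat v = Z.of_nat j - Z.of_nat v + 1)%Z); last lia.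
rewrite [spread _ t.+1 _]/=.
by case: (ones_stage_active v (t := t) (j := j)); rewrite ?hact //; lia.
Qed.

End Block.

Lemma block_exists v : 0 < v -> v < N -> ~~ tight (v + w) -> exists lo hi, block lo hi v.
Proof.
move=> hv0 hvN hv.
have exlo : exists j, (j < v) && ((j == 0) || tight (j + w)) by exists 0; rewrite hv0.
have lo_ub : forall j, (j < v) && ((j == 0) || tight (j + w)) -> j <= v.
  by move=> j /andP[/ltnW].
have [lo /andP[hlo hlo_wall] lo_max] := ex_maxnP exlo lo_ub.
have exhi : exists j, [&& v < j, j <= N & (j == N) || tight (j + w)].
  by exists N; rewrite hvN leqnn eqxx.
have [hi /and3P[hhi hhiN hhi_wall] hi_min] := ex_minnP exhi.
exists lo, hi; split; rewrite ?hlo ?hhi // => j /andP[hj1 hj2]; apply/negP => ht.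
have [hjv|hvj|hjv] := ltngtP j v; last by move: hv; rewrite -hjv ht.
  by have := lo_max j; rewrite hjv ht orbT => /(_ isT); lia.
by have := hi_min j; rewrite hvj ht orbT (_ : j <= N) ?andbT => [/(_ isT)|]; lia.
Qed.

Lemma ones_stage_final v : 0 < v -> v < N -> ones (stage (2 * w - 1)) v v = 0.
Proof.
move=> hv0 hvN.
have [hv|hv] := boolP (tight (v + w)).
  by apply/eqP; rewrite -leqn0 -(subnn v); apply: ones_stage_wall_le.
have [lo [hi hblock]] := block_exists hv0 hvN hv.
have [/andP[hlo hhi] _ _ _ _] := hblock.
have := ones_block_bound hblock (t := 2 * w - 1) (j := v) ltac:(lia); rewrite Z.sub_diag.
suff : (spread (profile v) (delay v (2 * w - 1) v) 0 <= 0)%Z by lia.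
have hk : ones pi v v <= w by have := ones_le_bandwidth hbw v v; lia.
have [ht|ht] := boolP (tight v).
  rewrite /delay /phase last_tight_tight // eqxx.
  by apply: spread_init_profile_nonpos; lia.
have [->|->] : delay v (2 * w - 1) v = 2 * w - 1 \/ delay v (2 * w - 1) v = 2 * w - 2.
  - by rewrite /delay; case: ifP; lia.
all: by apply: spread_init_profile_nonpos; move: ht; rewrite /tight; lia.
Qed.

Lemma stage_final : stage (2 * w - 1) = 1%g.
Proof.
apply: perm_le_id => p; rewrite leqNgt; apply/negP => hp.
have hv : p.+1 < N by have := ltn_ord (stage (2 * w - 1) p); lia.
have /eqP := ones_stage_final (ltn0Sn p) hv.
by rewrite cards_eq0 => /eqP /setP /(_ p); rewrite !inE ltnSn hp.
Qed.

Lemma stage_prod t : pi = (\prod_(i < t) exch_perm (stage i) (active i.+1) * stage t)%g.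
Proof.
elim: t => [|t IH]; first by rewrite big_ord0 mul1g.
by rewrite big_ord_recr /= -mulgA (mulgA (exch_perm _ _)) exch_perm_sqr mul1g.
Qed.

End Schedule.

Lemma bandwidth_prod_bw1 n (pi : 'S_n) w : 0 < w -> bandwidth pi w ->
  prod_bw1_atmost pi (2 * w - 1).
Proof.
move=> hw hbw.
exists [seq exch_perm (stage pi w i) (active pi w i.+1) | i <- iota 0 (2 * w - 1)]; split.
- by rewrite size_map size_iota.
- by move=> s /mapP[i _ ->]; apply: exch_perm_bw1.
- rewrite big_map -{1}(subn0 (2 * w - 1)) -/(index_iota 0 (2 * w - 1)) big_mkord.
  by rewrite {1}(stage_prod pi w (2 * w - 1)) stage_final // mulg1.
Qed.

Lemma bandwidth1_swap n (s : 'S_n) (x y : 'I_n) : bandwidth s 1 ->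
  y = x.+1 :> nat -> s x = y -> s y = x.
Proof.
move=> hs; suff: forall k (x y : 'I_n), x < k -> y = x.+1 :> nat -> s x = y -> s y = x.
  by apply; apply: ltnSn.
elim=> [//|k IH] {}x {}y hxk hy hsx.
have hz : s ((s^-1)%g x) = x by rewrite permKV.
have [h1 h2] := bandwidthP ((s^-1)%g x) hs; rewrite hz in h1 h2.
case: (ltngtP ((s^-1)%g x) x) => hzx.
- have hxz : s x = (s^-1)%g x by apply: IH => //; lia.
  by move: hsx hy; rewrite hxz => <-; lia.
- by rewrite -[in RHS]hz; congr (s _); apply: ord_inj; rewrite hy; lia.
- by move/ord_inj: hzx hz hsx hy => -> -> <-; lia.
Qed.

Section LowerBound.
Variables (n w : nat).

Definition escaped (p : 'S_n) j := #|[set x : 'I_n | (x < w) && (j <= p x)]|.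

Lemma escaped_succ (p : 'S_n) j : escaped p j <= escaped p j.+1 + 1.
Proof.
set A := [set x : 'I_n | (x < w) && (j.+1 <= p x)].
set B := [set x : 'I_n | p x == j :> nat].
have hB : #|B| <= 1.
  apply/card_le1_eqP => x y; rewrite !inE => /eqP hx /eqP hy.
  by apply: (@perm_inj _ p); apply: ord_inj; rewrite hx hy.
apply: leq_trans (leq_trans (leq_card_setU A B) (leq_add (leqnn _) hB)).
apply: subset_leq_card; apply/subsetP => x; rewrite !inE => /andP[-> /=].
by rewrite leq_eqVlt eq_sym => /orP[->|->]; rewrite ?orbT.
Qed.

Section MulBandwidth1.
Variable s : 'S_n.
Hypothesis hs : bandwidth s 1.

Lemma escaped_mul_bw1 (p : 'S_n) j : escaped (p * s) j.+1 <= escaped p j.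
Proof.
apply: subset_leq_card; apply/subsetP => x; rewrite !inE permM => /andP[-> h] /=.
by have [+ _] := bandwidthP (p x) hs; lia.
Qed.

Lemma escaped_mul_bw1_drop (p : 'S_n) j :
  escaped p j.+2 < escaped p j.+1 -> escaped (p * s) j.+1 <= escaped p j.+1.
Proof.
move=> hlt.
set X := [set x : 'I_n | (x < w) && (j.+1 <= (p * s)%g x)].
set Y := [set x : 'I_n | (x < w) && (j.+1 <= p x)].
have [x0 hx0Y hx0] : exists2 x0, x0 \in Y & p x0 = j.+1 :> nat.
  case: (pickP (fun x => (x \in Y) && (p x == j.+1 :> nat))) => [x /andP[? /eqP]|hY].
    by exists x.
  move: hlt; rewrite ltnNge => /negP[]; apply: subset_leq_card; apply/subsetP => x.
  rewrite !inE => /andP[hw hx]; move: (hY x); rewrite inE hw hx /=.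
  by rewrite ltn_neqAle hx andbT eq_sym => /negbT.
case: (pickP (fun x => (x \in X) && (p x <= j))) => [x /andP[hxX hxj]|hXY]; last first.
  apply: subset_leq_card; apply/subsetP => y hy; move: (hXY y); rewrite hy /= => /negbT.
  by rewrite -ltnNge; move: hy; rewrite !inE => /andP[-> _].
have := hxX; rewrite inE permM => /andP[_ hsx].
have [h1 _] := bandwidthP (p x) hs.
have hpx : p x = j :> nat by lia.
have hs0 : s (p x0) = p x.
  apply: (bandwidth1_swap hs); first by rewrite hx0 hpx.
  by apply: ord_inj; lia.
have hx0X : x0 \notin X by rewrite inE permM hs0 hpx ltnn andbF.
rewrite /escaped -/X -/Y (cardsD1 x X) hxX (cardsD1 x0 Y) hx0Y !add1n ltnS.
apply: subset_leq_card; apply/subsetP => y; rewrite !inE permM => /and3P[hyx hyw hy].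
rewrite hyw; apply/andP; split.
  by apply: contraNneq hx0X => <-; rewrite inE permM hy hyw.
rewrite ltnNge; apply: contraNN hyx => hle.
have [h2 _] := bandwidthP (p y) hs.
by apply/eqP/(@perm_inj _ p)/ord_inj; lia.
Qed.

End MulBandwidth1.

(* The i-th most advanced of the points 0..w-1 does not move during the first
   [i - 1] factors and advances by at most one place per factor afterwards. *)
Definition escaped_bound (p : 'S_n) t :=
  forall i j, 0 < i <= w -> w + (t.+1 - i) < j + i -> escaped p j < i.

Lemma escaped_bound1 : escaped_bound 1 0.
Proof.
move=> i j hi hj; rewrite /escaped (eq_card (B := [set x : 'I_n | j <= x < w])).
  by apply: leq_ltn_trans (card_ord_range_le n j w) _; lia.
by move=> x; rewrite !inE perm1 andbC.
Qed.

Lemma escaped_bound_mul_bw1 (p s : 'S_n) t : bandwidth s 1 ->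
  escaped_bound p t -> escaped_bound (p * s) t.+1.
Proof.
move=> hs hp i [|j] hi hj; first lia.
have [hit|hit] := leqP i t.+1.
  by apply: leq_ltn_trans (escaped_mul_bw1 hs p j) _; apply: hp; lia.
have h1 : escaped p j.+1 < i by apply: hp; lia.
have h2 : escaped p j.+2 < i.-1 by apply: hp; lia.
have [h3|h3] := leqP (escaped p j.+1) i.-2.
  by have := escaped_mul_bw1 hs p j; have := escaped_succ p j; lia.
by have := escaped_mul_bw1_drop hs (p := p) (j := j) ltac:(lia); lia.
Qed.

Lemma escaped_bound_prod (ss : seq 'S_n) : (forall s, s \in ss -> bandwidth s 1) ->
  escaped_bound (\prod_(s <- ss) s)%g (size ss).
Proof.
elim/last_ind: ss => [|ss s IH] hss; first by rewrite big_nil; apply: escaped_bound1.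
rewrite -cats1 big_cat big_seq1 size_cat addn1.
apply: escaped_bound_mul_bw1; first by apply: hss; rewrite mem_rcons mem_head.
by apply: IH => x hx; apply: hss; rewrite -cats1 mem_cat hx.
Qed.

Lemma prod_bw1_length_ge (p : 'S_n) k : 0 < w -> escaped p w = w ->
  prod_bw1_atmost p k -> 2 * w - 1 <= k.
Proof.
move=> hw hpw [ss [hk hss hp]]; subst p; rewrite leqNgt; apply/negP => hlt.
suff : escaped (\prod_(s <- ss) s)%g w < w by rewrite hpw ltnn.
apply: escaped_bound_prod => //; lia.
Qed.

End LowerBound.

Lemma sigma_val_lt w n (i : 'I_n) : 2 * w <= n -> sigma_val w i < n.
Proof. by rewrite /sigma_val; case: (ltnP i w); case: (ltnP i (2 * w)); have := ltn_ord i; lia. Qed.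

Lemma sigma_val_inj w : injective (sigma_val w).
Proof.
move=> a b; rewrite /sigma_val.
by case: (ltnP a w); case: (ltnP b w); case: (ltnP a (2 * w)); case: (ltnP b (2 * w)); lia.
Qed.

Section Sigma.
Variables (w n : nat) (hwn : 2 * w <= n).

Definition sigma_perm : 'S_n :=
  perm (fun a b (e : Ordinal (sigma_val_lt a hwn) = Ordinal (sigma_val_lt b hwn)) =>
          ord_inj (sigma_val_inj (congr1 val e))).

Lemma sigma_permE (i : 'I_n) : sigma_perm i = sigma_val w i :> nat.
Proof. by rewrite permE. Qed.

Lemma bandwidth_sigma_perm : bandwidth sigma_perm w.
Proof.
by move=> i; rewrite sigma_permE /sigma_val; case: (ltnP i w); case: (ltnP i (2 * w)); lia.
Qed.

Lemma escaped_sigma_perm : escaped w sigma_perm w = w.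
Proof.
rewrite /escaped (eq_card (B := [set x : 'I_n | x < w])) ?card_ord_lt; first lia.
by move=> x; rewrite !inE sigma_permE /sigma_val; case: (ltnP x w); lia.
Qed.

End Sigma.

Theorem corollary1p2 (w : nat) (hw : 1 <= w) :
  (forall (n : nat) (pi : 'S_n), bandwidth pi w -> prod_bw1_atmost pi (2 * w - 1))
  /\
  (forall n : nat, 2 * w <= n ->
     exists sigma : 'S_n,
       [/\ forall i : 'I_n, val (sigma i) = sigma_val w i,
           bandwidth sigma w
         & forall k, k < 2 * w - 1 -> ~ prod_bw1_atmost sigma k]).
Proof.
split=> [n pi hbw | n hn]; first exact: bandwidth_prod_bw1.
exists (sigma_perm hn); split.
- exact: sigma_permE.
- exact: bandwidth_sigma_perm.
- by move=> k hk /(prod_bw1_length_ge hw (escaped_sigma_perm hn)); lia.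
Qed.
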